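(* Let $X\subset\mathbb{R}_+$ be a Borel set with $0\in X$, let $\kappa\ge0$ and $\delta\in(0,1)$, and let $x_0>0$ satisfy $x_0\ge\frac{2\delta\kappa}{1-\delta}$. Let $\bar p$ be the stationary decision rule with $\bar p(y)=\frac{1-\delta}{2-\delta}$ for all $y\ge x_0$. Then: (a) $R_{\bar p}(x_0)\ge 1/4$; (b) if $\sup X=\infty$, then $\bar p$ is dynamically robust, i.e. $R_{\bar p}(x_0)=\sup_pR_p(x_0)$, the supremum being over all stationary decision rules.
   Context: Search with additive-multiplicative costs. Fix a Borel set $X\subset\mathbb{R}_+$ with $0\in X$, an additive cost $\kappa\ge 0$ and a discount factor $\delta\in(0,1]$ with $\kappa+(1-\delta)>0$, and an outside option $x_0>0$. An environment is a probability distribution $F$ on $X$; alternatives $x_1,x_2,\dots$ are i.i.d. with law $F$, and the best-so-far alternative after round $t$ is $y_t=\max\{x_0,\dots,x_t\}$. In each round the individual either stops and consumes the best-so-far alternative, or proceeds to the next round, incurring cost $\kappa$ with all future payoffs discounted by $\delta$; thus stopping at round $t\ge1$ yields, from the perspective of round $0$, $-(\delta+\dots+\delta^t)\kappa+\delta^ty_t$. A stationary decision rule is a function $p$ giving the stopping probability $p(y)\in[0,1]$ as a function of the current best-so-far alternative $y$. For an environment $F$ and a current best-so-far alternative $y$, $U_p(F,y)$ denotes the expected payoff of $p$, which satisfies $U_p(F,y)=p(y)y+(1-p(y))\delta\big(-\kappa+\int U_p(F,\max\{y,x\})\,dF(x)\big)$, and $V(F,y)$ is the optimal (supremal) expected payoff,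 satisfying $V(F,y)=\max_{q\in[0,1]}\big(qy+(1-q)\delta(-\kappa+\int V(F,\max\{y,x\})\,dF(x))\big)$. A binary environment $F_{(z,\sigma)}$ is the lottery giving $0$ with probability $1-\sigma$ and $z$ with probability $\sigma$; $\mathcal B_X=\{F_{(z,\sigma)}:z\in X,\sigma\in[0,1]\}$. The performance ratio of $p$ is $R_p(x_0)=\inf_{y\ge x_0}\inf_{F\in\mathcal B_X}U_p(F,y)/V(F,y)$. *)

From HB Require Import structures.
From mathcomp Require Import all_boot all_order all_algebra.
From mathcomp Require Import all_classical all_reals all_analysis.
From Stdlib Require Import ClassicalEpsilon.

Set Implicit Arguments. Unset Strict Implicit. Unset Printing Implicit Defensive.
Import Order.TTheory GRing.Theory Num.Theory.
Local Open Scope classical_set_scope.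
Local Open Scope ring_scope.

Section Search.
Variable R : realType.

(* Integral of g(max{y,x}) dF(x) for the binary environment F_(z,sigma):
   0 with probability 1-sigma, z with probability sigma. *)
Definition bint (z sigma : R) (g : R -> R) (y : R) : R :=
  (1 - sigma) * g (Num.max y 0) + sigma * g (Num.max y z).

Definition is_rule (p : R -> R) : Prop := forall y, 0 <= p y <= 1.

Definition U_eq (kappa delta : R) (p : R -> R) (z sigma : R) (U : R -> R) : Prop :=
  forall y, 0 <= y ->
    U y = p y * y + (1 - p y) * (delta * (- kappa + bint z sigma U y)).

(* The Bellman equation for the optimal payoff V(F_(z,sigma), .):
   max over q in [0,1] of q*y + (1-q)*w, i.e. max(y, w). *)
Definition V_eq (kappa delta : R) (z sigma : R) (V : R -> R) : Prop :=
  forall y, 0 <= y ->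
    V y = Num.max y (delta * (- kappa + bint z sigma V y)).

Definition Upay (kappa delta : R) (p : R -> R) (z sigma : R) : R -> R :=
  epsilon (inhabits (fun _ : R => 0)) (U_eq kappa delta p z sigma).

Definition Vopt (kappa delta : R) (z sigma : R) : R -> R :=
  epsilon (inhabits (fun _ : R => 0)) (V_eq kappa delta z sigma).

Definition perf (X : set R) (kappa delta : R) (p : R -> R) (x0 : R) : \bar R :=
  ereal_inf [set r : \bar R | exists y z sigma : R,
    [/\ x0 <= y, X z, 0 <= sigma <= 1 &
     r = (Upay kappa delta p z sigma y / Vopt kappa delta z sigma y)%:E]].

End Search.

From HB Require Import structures.
From mathcomp Require Import all_boot all_order all_algebra.
From mathcomp Require Import all_classical all_reals all_analysis.
From mathcomp Require Import ring lra.
From Stdlib Require Import ClassicalEpsilon.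
Import Order.TTheory GRing.Theory Num.Theory.
Local Open Scope classical_set_scope.
Local Open Scope ring_scope.

(* In a binary environment F_(z,sigma) both payoffs are explicit.  For the constant
   rule pbar = (1-delta)/(2-delta) the payoff at y >= z is ((1-delta) y - delta kappa)/(2(1-delta)),
   which is at least y/4 once 2 delta kappa <= (1-delta) y; below z it is a mixture that
   still dominates a quarter of V(y) = max(y, value of waiting for z).  So R_pbar(x0) >= 1/4.
   Conversely, let A(t) = t/(1-(1-t) delta) (stopweight delta t): when the best alternative
   z has been found, U(z) <= A(p z) z.  Against a rare (sigma small) and distant (z large)
   prize the ratio U(y)/V(y) is at most about (1 - A(p y)) A(p z), so R_p(x0) >= 1/4 + e
   forces A(p z) >= A(p y) + e/2 for some z >= x0.  Iterating pushes A above 1, which is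
   absurd; hence R_p(x0) <= 1/4 <= R_pbar(x0) whenever X is unbounded. *)

Section Inequalities.
Context {R : realType}.
Implicit Types d t : R.

Definition stopweight d t := t / (1 - (1 - t) * d).

Lemma stopweight_denom_ge {d t} : 0 <= d -> 0 <= t <= 1 -> 1 - d <= 1 - (1 - t) * d.
Proof. by move=> d0 /andP[t0 t1]; nra. Qed.

Lemma stopweight_itv {d t} : 0 <= d -> d < 1 -> 0 <= t <= 1 -> 0 <= stopweight d t <= 1.
Proof.
move=> d0 d1 ht; have /andP[t0 t1] := ht.
have D0 : 0 < 1 - (1 - t) * d by have := stopweight_denom_ge d0 ht; lra.
by rewrite /stopweight divr_ge0 ?ler_pdivrMr //=; [nra | lra].
Qed.

Lemma stopweight_lipschitz {d' d t} : 0 <= d' <= d -> d < 1 -> 0 <= t <= 1 ->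
  stopweight d t - stopweight d' t <= (d - d') / (1 - d) ^+ 2.
Proof.
move=> /andP[d'0 d'd] d1 ht; have /andP[t0 t1] := ht.
have D := stopweight_denom_ge (le_trans d'0 d'd) ht.
have D' := stopweight_denom_ge d'0 ht.
have E : stopweight d t - stopweight d' t =
    t * (1 - t) * (d - d') / ((1 - (1 - t) * d) * (1 - (1 - t) * d')).
  by rewrite /stopweight; field; apply/andP; split; rewrite lt0r_neq0 //; lra.
have a0 : 0 < (1 - d) ^+ 2 by rewrite exprn_gt0 // subr_gt0.
rewrite E ler_pdivrMr; last by apply: mulr_gt0; lra.
have dd : 0 <= d - d' by lra.
apply: (@le_trans _ _ (d - d')).
  by rewrite -[leRHS]mul1r; apply: ler_wpM2r => //; nra.
rewrite mulrAC ler_pdivlMr // ler_wpM2l // expr2.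
by apply: ler_pM; lra.
Qed.

Lemma ratio_le_stopweight {d k s y z P Aq Uy Vy : R} :
  0 < d < 1 -> 0 <= k -> 0 <= s <= 1 -> 0 <= P <= 1 -> 0 <= Aq <= 1 -> 0 <= y ->
  0 < s * z - k ->
  Uy * (1 - (1 - P) * d * (1 - s)) <= P * y + (1 - P) * d * s * (Aq * z) ->
  d * (s * z - k) <= Vy * (1 - d * (1 - s)) -> 0 < Vy ->
  Uy / Vy <= y / (d * (s * z - k)) + (1 - stopweight (d * (1 - s)) P) * Aq + k / (s * z - k).
Proof.
move=> /andP[d0 d1] k0 /andP[s0 s1] hP /andP[Aq0 Aq1] y0 M0 hU hV V0.
set B := P * y + _ in hU *.
have /andP[P0 P1] := hP.
set M := s * z - k in M0 hU hV *.
set W := 1 - d * (1 - s) in hV *; set D1 := 1 - (1 - P) * d * (1 - s) in hU.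
set A' := stopweight (d * (1 - s)) P.
have /andP[A'0 A'1] : 0 <= A' <= 1 by apply: stopweight_itv => //; nra.
have W0 : 0 < W by rewrite /W; nra.
have W1 : W <= 1 by rewrite /W; nra.
have D10 : 0 < D1.
  have : (1 - P) * (1 - s) <= 1 by nra.
  by rewrite /D1; nra.
have dM0 : 0 < d * M by apply: mulr_gt0.
have yM0 : 0 <= y / (d * M) by apply: divr_ge0 => //; apply: ltW.
have kM0 : 0 <= k / M by apply: divr_ge0 => //; apply: ltW.
have [Uy0 | Uy0] := leP Uy 0.
  apply: (@le_trans _ _ 0); first by rewrite mulr_le0_ge0 // invr_ge0 ltW.
  by apply: addr_ge0; [apply: addr_ge0 |] => //; apply: mulr_ge0; lra.
have lower_V : Uy / Vy <= Uy * W / (d * M).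
  rewrite ler_pdivrMr // mulrAC ler_pdivlMr //.
  by rewrite mulrAC -mulrA ler_wpM2l // ltW.
have upper_U : Uy * W / (d * M) <= B / D1 * W / (d * M).
  by rewrite ler_pM2r ?invr_gt0 // ler_pM2r // ler_pdivlMr.
have split_bound : B / D1 * W / (d * M) =
    A' * W * (y / (d * M)) + (1 - A') * Aq * (1 + k / M).
  rewrite /A' /stopweight /B /W /D1 /M; field.
  by rewrite -/M mulrA -/D1 !lt0r_neq0.
have yterm : A' * W * (y / (d * M)) <= y / (d * M).
  by rewrite -[leRHS]mul1r ler_wpM2r //; nra.
have kterm : (1 - A') * Aq * (k / M) <= k / M.
  by rewrite -[leRHS]mul1r ler_wpM2r //; nra.
rewrite [(1 - A') * Aq * _]mulrDr mulr1 in split_bound; lra.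
Qed.

Lemma le_add_of_quarter_lt_mul {a b c : R} : 0 <= a <= 1 -> 0 <= c ->
  1 / 4 + c < b * (1 - a) -> a + c <= b.
Proof.
move=> /andP[a0 a1] c0 h; rewrite leNgt; apply/negP => hb.
have : b * (1 - a) <= (a + c) * (1 - a) by rewrite ler_wpM2r //; [lra | apply: ltW].
have : 0 <= (a - 1 / 2) ^+ 2 by apply: sqr_ge0.
rewrite expr2; nra.
Qed.

Lemma max_le_quarter_payoff {a b D y z Uy Uz : R} :
  0 < a -> 0 <= b -> 0 <= D -> 2 * D <= a * y -> y <= z ->
  Uz * (2 * a) = a * z - D -> Uy * (2 * a + b) = a * y - D + b * Uz ->
  Num.max y ((b * z - D) / (a + b)) <= 4 * Uy.
Proof.
move=> a0 b0 D0 hD yz EUz EUy.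
have y0 : 0 <= y by nra.
set T := 2 * a * y + b * (2 * z - y).
have hT : T <= 4 * Uy * (2 * a + b).
  have -> : 4 * Uy * (2 * a + b) = 4 * (a * y - D) + 2 * b * (Uz * (2 * a)) / a.
    by rewrite -mulrA EUy; field; rewrite lt0r_neq0.
  rewrite EUz -(ler_pM2l a0) [in leRHS]mulrDr [a * (_ / a)]mulrC divfK ?lt0r_neq0 // /T.
  have hD' : 0 <= a * y - 2 * D by lra.
  by have := mulr_ge0 (ltW a0) hD'; have := mulr_ge0 b0 hD'; nra.
have ab0 : 0 < 2 * a + b by lra.
rewrite ge_max; apply/andP; split.
  by rewrite -(ler_pM2r ab0); apply: le_trans hT; rewrite /T; nra.
rewrite ler_pdivrMr ?ltr_wpDr //.
rewrite -(ler_pM2r ab0) mulrAC; apply: (le_trans _ (ler_wpM2r (ltW (ltr_wpDr b0 a0)) hT)).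
rewrite /T; nra.
Qed.

End Inequalities.

Section Payoffs.
Context {R : realType} {kappa delta : R} (kappa_ge0 : 0 <= kappa) (delta01 : 0 < delta < 1).

Definition Vwait z sigma := delta * (sigma * z - kappa) / (1 - delta * (1 - sigma)).

Section Environment.
Context {z sigma : R} (sigma01 : 0 <= sigma <= 1).

Let W_gt0 : 0 < 1 - delta * (1 - sigma).
Proof. by case/andP: delta01 sigma01 => d0 d1 /andP[s0 s1]; nra. Qed.

Lemma V_eq_solvable : exists V, V_eq kappa delta z sigma V.
Proof.
move: kappa_ge0 delta01 sigma01 => k0 /andP[d0 d1] /andP[s0 s1].
exists (fun y => if z <= y then y else Num.max y (Vwait z sigma)) => y y0.
rewrite /bint (max_l y0); case: (leP z y) => zy; last rewrite lexx.
  by rewrite /= zy max_l //; nra.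
rewrite /=; case: (leP y (Vwait z sigma)) => yw.
  have -> : delta * (- kappa + ((1 - sigma) * Vwait z sigma + sigma * z)) = Vwait z sigma.
    by rewrite /Vwait; field; rewrite lt0r_neq0.
  by rewrite max_r.
rewrite max_l //.
have : delta * (sigma * z - kappa) < y * (1 - delta * (1 - sigma)) by rewrite -ltr_pdivrMr.
nra.
Qed.

Lemma VoptP : V_eq kappa delta z sigma (Vopt kappa delta z sigma).
Proof. by apply: epsilon_spec; apply: V_eq_solvable. Qed.

Lemma V_eq_above {V y} : V_eq kappa delta z sigma V -> 0 <= y -> z <= y -> V y = y.
Proof.
move: kappa_ge0 delta01 => k0 /andP[d0 d1] HV y0 zy.
have := HV y y0; rewrite /bint (max_l y0) (max_l zy).
by case: leP => // h E; nra.
Qed.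

Lemma V_eq_below {V y} : V_eq kappa delta z sigma V -> 0 <= y -> y < z ->
  V y = Num.max y (Vwait z sigma).
Proof.
move=> HV y0 yz; have := HV y y0.
rewrite /bint (max_l y0) (max_r (ltW yz)) (V_eq_above HV (ltW (le_lt_trans y0 yz)) (lexx z)).
case: (leP y (delta * _)) => h E.
  have EV : V y = Vwait z sigma.
    apply: (mulIf (lt0r_neq0 W_gt0)); rewrite divfK ?lt0r_neq0 //.
    by rewrite mulrBr mulr1 {1}E; ring.
  by rewrite EV max_r // -EV E.
rewrite E max_l //; apply: ltW.
by rewrite /Vwait ltr_pdivrMr //; nra.
Qed.

Section Rule.
Context {p : R -> R} (p_rule : is_rule p).

Lemma U_eq_solvable : exists U, U_eq kappa delta p z sigma U.
Proof.
move: delta01 sigma01 => /andP[d0 d1] /andP[s0 s1].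
pose Ustop y := (p y * y - (1 - p y) * delta * kappa) / (1 - (1 - p y) * delta).
exists (fun y => if z <= y then Ustop y else
  (p y * y - (1 - p y) * delta * kappa + (1 - p y) * delta * sigma * Ustop z) /
  (1 - (1 - p y) * delta * (1 - sigma))) => y y0.
rewrite /bint (max_l y0); have /andP[p0 p1] := p_rule y.
case: (leP z y) => zy; last rewrite lexx.
  have D : 1 - (1 - p y) * delta != 0 by rewrite lt0r_neq0 //; nra.
  by rewrite /= zy /Ustop; field.
have : (1 - p y) * (1 - sigma) <= 1 by nra.
have /andP[pz0 pz1] := p_rule z.
move=> h; have D : 1 - (1 - p y) * delta * (1 - sigma) != 0 by rewrite lt0r_neq0 //; nra.
have Dz : 1 - (1 - p z) * delta != 0 by rewrite lt0r_neq0 //; nra.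
by rewrite /Ustop /=; field; rewrite D Dz.
Qed.

Lemma UpayP : U_eq kappa delta p z sigma (Upay kappa delta p z sigma).
Proof. by apply: epsilon_spec; apply: U_eq_solvable. Qed.

Lemma U_eq_above {U y} : U_eq kappa delta p z sigma U -> 0 <= y -> z <= y ->
  U y * (1 - (1 - p y) * delta) = p y * y - (1 - p y) * delta * kappa.
Proof.
move=> HU y0 zy; have := HU y y0; rewrite /bint (max_l y0) (max_l zy) => E.
by rewrite mulrBr mulr1 {1}E; ring.
Qed.

Lemma U_eq_below {U y} : U_eq kappa delta p z sigma U -> 0 <= y -> y < z ->
  U y * (1 - (1 - p y) * delta * (1 - sigma)) =
  p y * y - (1 - p y) * delta * kappa + (1 - p y) * delta * sigma * U z.
Proof.
move=> HU y0 yz; have := HU y y0; rewrite /bint (max_l y0) (max_r (ltW yz)) => E.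
by rewrite mulrBr mulr1 {1}E; ring.
Qed.

Lemma U_eq_le_stopweight {U y} : U_eq kappa delta p z sigma U -> 0 <= y -> z <= y ->
  U y <= stopweight delta (p y) * y.
Proof.
move: kappa_ge0 delta01 => k0 /andP[d0 d1] HU y0 zy.
have /andP[p0 p1] := p_rule y.
have D : 0 < 1 - (1 - p y) * delta by nra.
rewrite /stopweight mulrAC ler_pdivlMr // (U_eq_above HU) //.
by rewrite lerBlDr lerDl; apply: mulr_ge0 => //; apply: mulr_ge0; lra.
Qed.

Lemma U_eq_below_le {U y} : U_eq kappa delta p z sigma U -> 0 <= y -> y < z ->
  U y * (1 - (1 - p y) * delta * (1 - sigma)) <=
  p y * y + (1 - p y) * delta * sigma * (stopweight delta (p z) * z).
Proof.
move: kappa_ge0 delta01 sigma01 => k0 /andP[d0 d1] /andP[s0 s1] HU y0 yz.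
have /andP[p0 p1] := p_rule y.
have Uz := U_eq_le_stopweight HU (ltW (le_lt_trans y0 yz)) (lexx z).
rewrite (U_eq_below HU) // -addrA lerD2l.
have : 0 <= (1 - p y) * delta by apply: mulr_ge0; lra.
move=> h; have := ler_wpM2l (mulr_ge0 h s0) Uz; have := mulr_ge0 h k0; lra.
Qed.

End Rule.
End Environment.

Lemma pbar_ratio_ge_quarter {x0 pbar y z sigma} :
  0 < x0 -> 2 * delta * kappa / (1 - delta) <= x0 -> is_rule pbar ->
  (forall y, x0 <= y -> pbar y = (1 - delta) / (2 - delta)) ->
  x0 <= y -> 0 <= sigma <= 1 ->
  1 / 4 <= Upay kappa delta pbar z sigma y / Vopt kappa delta z sigma y.
Proof.
move: kappa_ge0 delta01 => k0 /andP[d0 d1] x0_gt0 hx0 hrule hc xy hs.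
have HU := UpayP (z := z) hs hrule; have HV := VoptP (z := z) hs.
set U := Upay _ _ _ _ _ in HU *; set V := Vopt _ _ _ _ in HV *.
have y0 : 0 < y := lt_le_trans x0_gt0 xy.
have a0 : 0 < 1 - delta by lra.
have d2 : 2 - delta != 0 by rewrite lt0r_neq0 //; lra.
have hD : 2 * (delta * kappa) <= (1 - delta) * y.
  by rewrite ler_pdivrMr // in hx0; nra.
have Ustop t : x0 <= t -> z <= t ->
    U t * (2 * (1 - delta)) = (1 - delta) * t - delta * kappa.
  move=> xt zt; have := U_eq_above HU (le_trans (ltW x0_gt0) xt) zt; rewrite hc // => E.
  transitivity (U t * (1 - (1 - (1 - delta) / (2 - delta)) * delta) * (2 - delta)).
    by field.
  by rewrite E; field.
have [zy | yz] := leP z y.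
  rewrite (V_eq_above HV (ltW y0) zy) ler_pdivlMr //.
  by have := Ustop y xy zy; nra.
have Uy : U y * (2 * (1 - delta) + delta * sigma) =
    (1 - delta) * y - delta * kappa + delta * sigma * U z.
  have := U_eq_below HU (ltW y0) yz; rewrite hc // => E.
  transitivity (U y * (1 - (1 - (1 - delta) / (2 - delta)) * delta * (1 - sigma)) * (2 - delta)).
    by field.
  by rewrite E; field.
rewrite (V_eq_below hs HV (ltW y0) yz) ler_pdivlMr ?lt_max ?y0 //.
have -> : Vwait z sigma = (delta * sigma * z - delta * kappa) / (1 - delta + delta * sigma).
  by rewrite /Vwait; congr (_ / _); ring.
have b0 : 0 <= delta * sigma by case/andP: hs => s0 _; apply: mulr_ge0; lra.
have D0 : 0 <= delta * kappa by apply: mulr_ge0; lra.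
have := max_le_quarter_payoff a0 b0 D0 hD (ltW yz)
  (Ustop z (le_trans xy (ltW yz)) (lexx z)) Uy.
lra.
Qed.

Lemma quarter_le_perf_pbar (X : set R) {x0 pbar} :
  0 < x0 -> 2 * delta * kappa / (1 - delta) <= x0 -> is_rule pbar ->
  (forall y, x0 <= y -> pbar y = (1 - delta) / (2 - delta)) ->
  ((1 / 4 : R)%:E <= perf X kappa delta pbar x0)%E.
Proof.
move=> x0_gt0 hx0 hpbar hc; apply/ereal_infP => _ [y [z [sigma [xy _ hs ->]]]].
by rewrite lee_fin; apply: (pbar_ratio_ge_quarter x0_gt0 hx0 hpbar hc xy hs).
Qed.

Lemma stopweight_climb {X : set R} {x0 r p y} :
  (forall M : R, exists2 x, X x & M < x) -> is_rule p ->
  0 < x0 -> 1 / 4 < r <= 1 / 2 ->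
  (forall y z sigma, x0 <= y -> X z -> 0 <= sigma <= 1 ->
     r <= Upay kappa delta p z sigma y / Vopt kappa delta z sigma y) ->
  x0 <= y ->
  exists2 z, x0 <= z & stopweight delta (p y) + (r - 1 / 4) / 2 <= stopweight delta (p z).
Proof.
move: kappa_ge0 delta01 => k0 hd Xunb hp x0_gt0 /andP[r_gt r_le] hr xy.
have /andP[d0 d1] := hd.
set e := r - 1 / 4; have e0 : 0 < e by rewrite /e; lra.
have e14 : e <= 1 / 4 by rewrite /e; lra.
have a2 : 0 < (1 - delta) ^+ 2 by rewrite exprn_gt0 // subr_gt0.
have a21 : (1 - delta) ^+ 2 <= 1 by rewrite expr2; nra.
(* The prize is so rare that A barely feels the change from delta to delta (1 - s),
   and so distant that y and kappa are negligible against s z. *)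
set s := e * (1 - delta) ^+ 2 / 8.
have s0 : 0 < s by rewrite /s; apply: divr_gt0 => //; apply: mulr_gt0.
have hs : 0 <= s <= 1.
  by rewrite ltW //= /s ler_pdivrMr // mul1r; have := ler_wpM2l (ltW e0) a21; lra.
have y0 : 0 < y := lt_le_trans x0_gt0 xy.
set B := 8 * (y / delta + kappa) / e.
have B0 : 0 <= B.
  by rewrite /B divr_ge0 ?(ltW e0) // mulr_ge0 // addr_ge0 // divr_ge0 // ltW.
have [z Xz] := Xunb (Num.max y ((B + kappa) / s)).
rewrite gt_max ltr_pdivrMr // => /andP[yz hz].
set M := s * z - kappa.
have BM : B < M by rewrite /M; lra.
have M0 : 0 < M := le_lt_trans B0 BM.
have HU := UpayP (z := z) hs hp; have HV := VoptP (z := z) hs.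
have Vy := V_eq_below hs HV (ltW y0) yz.
have Vy0 : 0 < Vopt kappa delta z s y by rewrite Vy lt_max y0.
have hV : delta * M <= Vopt kappa delta z s y * (1 - delta * (1 - s)).
  have W0 : 0 < 1 - delta * (1 - s) by nra.
  by rewrite Vy -ler_pdivrMr // le_max lexx orbT.
have hP := hp y.
have hq : 0 <= stopweight delta (p z) <= 1.
  exact: stopweight_itv (ltW d0) d1 (hp z).
have hU := U_eq_below_le hs hp HU (ltW y0) yz.
have := ratio_le_stopweight hd k0 hs hP hq (ltW y0) M0 hU hV Vy0.
have := hr y z s xy Xz hs.
have ds : 0 <= delta * (1 - s) <= delta by apply/andP; split; nra.
have := stopweight_lipschitz ds d1 hP.
rewrite -/M; set A := stopweight delta (p y); set A' := stopweight _ (p y).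
set Aq := stopweight delta (p z) in hq *; have /andP[Aq0 Aq1] := hq.
move=> lip rU ratio.
rewrite /B ltr_pdivrMr // in BM.
have yM : y / (delta * M) <= e / 8.
  by rewrite invfM mulrA ler_pdivrMr //; have := divr_ge0 (ltW y0) (ltW d0); lra.
have kM : kappa / M <= e / 8.
  by rewrite ler_pdivrMr //; have := divr_ge0 (ltW y0) (ltW d0); lra.
have AA' : A - A' <= e / 8.
  apply: le_trans lip _; rewrite ler_pdivrMr // (_ : e / 8 * _ = s); first nra.
  by rewrite /s; ring.
have gap : 1 / 4 + e / 2 < Aq * (1 - A).
  have re : r = 1 / 4 + e by rewrite /e; ring.
  have := ler_wpM2r Aq0 AA'; have := ler_wpM2l (ltW e0) Aq1; lra.
exists z; first by apply: le_trans (ltW yz).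
apply: le_add_of_quarter_lt_mul gap; last exact: ltW (divr_gt0 e0 _).
exact: stopweight_itv (ltW d0) d1 hP.
Qed.

Lemma perf_le_quarter {X : set R} {x0 p} :
  (forall M : R, exists2 x, X x & M < x) -> is_rule p ->
  0 < x0 -> (perf X kappa delta p x0 <= (1 / 4 : R)%:E)%E.
Proof.
move: delta01 => /andP[d0 d1] Xunb hp x0_gt0; rewrite leNgt; apply/negP => hperf.
have [r r_itv r_le] : exists2 r : R, 1 / 4 < r <= 1 / 2 & (r%:E <= perf X kappa delta p x0)%E.
  move: hperf; case: (perf X kappa delta p x0) => [v| |] // hv.
    exists (Num.min v (1 / 2)); last by rewrite lee_fin ge_min lexx.
    by rewrite lt_min -lte_fin hv ge_min lexx orbT /=; lra.
  by exists (1 / 2); rewrite ?leey //; lra.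
have hr y z sigma : x0 <= y -> X z -> 0 <= sigma <= 1 ->
    r <= Upay kappa delta p z sigma y / Vopt kappa delta z sigma y.
  by move=> xy Xz hs; rewrite -lee_fin; move/ereal_infP: r_le; apply; exists y, z, sigma.
have e0 : 0 < r - 1 / 4 by case/andP: r_itv; lra.
have climb n : exists2 y, x0 <= y & n%:R * ((r - 1 / 4) / 2) <= stopweight delta (p y).
  elim: n => [|n [y xy hy]].
    exists x0 => //; rewrite mul0r.
    by case/andP: (stopweight_itv (ltW d0) d1 (hp x0)).
  have [z xz hz] := stopweight_climb Xunb hp x0_gt0 r_itv hr xy.
  by exists z => //; rewrite -nat1r mulrDl mul1r; lra.
set n := Num.Def.archi_bound (2 / (r - 1 / 4)).
have hn : 2 < n%:R * (r - 1 / 4).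
  by rewrite -ltr_pdivrMr // archi_boundP // divr_ge0 // ltW.
have [y _ hy] := climb n.
have /andP[_ hy1] := stopweight_itv (ltW d0) d1 (hp y).
lra.
Qed.

End Payoffs.

Theorem theorem3 (R : realType) (X : set R) (kappa delta x0 : R) (pbar : R -> R) :
  measurable X -> X `<=` [set x | 0 <= x] -> X 0 ->
  0 <= kappa -> 0 < delta < 1 -> 0 < x0 ->
  2 * delta * kappa / (1 - delta) <= x0 ->
  is_rule pbar ->
  (forall y, x0 <= y -> pbar y = (1 - delta) / (2 - delta)) ->
  ((1 / 4 : R)%:E <= perf X kappa delta pbar x0)%E /\
  ((forall M : R, exists2 x, X x & M < x) ->
   forall p : R -> R, is_rule p -> (perf X kappa delta p x0 <= perf X kappa delta pbar x0)%E).
Proof.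
move=> _ _ _ k0 hd x0_gt0 hx0 hpbar hc.
have quarter_le := quarter_le_perf_pbar k0 hd X x0_gt0 hx0 hpbar hc.
split=> // Xunb p hp.
exact: le_trans (perf_le_quarter k0 hd Xunb hp x0_gt0) quarter_le.
Qed.
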